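(* Let $r\ge1$, let $H$ be a multi-hypergraph in which every hyperedge has size at most $r$, let $\mathcal{M}$ be a matroid and $\gamma\colon E(H)\to E(\mathcal{M})$. If $(H,\gamma)$ contains a maximal independent matching of size $\ell\ge 0$, then there exist an integer $a$ with $0\le a\le \ell$ and a set $U\subseteq V(H)$ with $|U|\le (2r-1)a$ such that $H-U$ contains an independent matching of size $\ell-a$ whose labels form a basis of $\mathrm{span}(\gamma(E(H-U)))$.
   Context: A multi-hypergraph $H=(V,E)$ consists of a finite set $V$ and a multiset $E$ of non-empty subsets of $V$; distinct copies of the same subset are distinct hyperedges and may receive different labels. For $U\subseteq V(H)$, $H-U$ has vertex set $V(H)\setminus U$ and all hyperedges disjoint from $U$. $\mathrm{span}$ denotes the closure operator of $\mathcal{M}$; a basis of a flat $S$ is a maximal independent subset of $S$. An independent matching in $(H,\gamma)$ is a collection $M$ of pairwise vertex-disjoint hyperedges with pairwise distinct labels such that $\gamma(M)$ is independent in $\mathcal{M}$ (the empty collection qualifies). It is inclusion-wise maximal if no independent matching strictly contains it, and maximal if there is no independent matching $M'$ with $\mathrm{span}(\gamma(M'))=\mathrm{span}(\gamma(M))$ that is not inclusion-wise maximal. *)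

From mathcomp Require Import all_boot.
Set Implicit Arguments. Unset Strict Implicit. Unset Printing Implicit Defensive.

Section Matroid.
Variable T : finType.
Variable indep : {set T} -> bool.

Definition is_matroid : Prop :=
  [/\ indep set0,
      (forall A B : {set T}, A \subset B -> indep B -> indep A) &
      (forall A B : {set T}, indep A -> indep B -> #|A| < #|B| ->
         exists2 x, x \in B :\: A & indep (x |: A))].

Definition mrank (X : {set T}) : nat :=
  \max_(I in powerset X | indep I) #|I|.

Definition span (X : {set T}) : {set T} :=
  [set e | mrank (e |: X) == mrank X].

Definition basis_of (S B : {set T}) : Prop :=
  [/\ B \subset S, indep B &
      forall B' : {set T}, B \subset B' -> B' \subset S -> indep B' -> B' = B].
End Matroid.

(* ---------- Labelled multi-hypergraphs ----------
   A multi-hypergraph H = (V, E): V a finType of vertices, E a finType indexing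
   the hyperedges (so repeated subsets are distinct hyperedges), and
   edge : E -> {set V} giving the vertex set of each hyperedge.
   gamma : E -> T labels hyperedges by matroid elements. *)
Section Hyper.
Variables (V E T : finType) (edge : E -> {set V}) (gamma : E -> T)
          (indep : {set T} -> bool).

Definition edges_minus (U : {set V}) : {set E} :=
  [set e | [disjoint edge e & U]].

Definition indep_matching (M : {set E}) : Prop :=
  [/\ (forall e f, e \in M -> f \in M -> e != f -> [disjoint edge e & edge f]),
      {in M &, injective gamma} &
      indep (gamma @: M)].

Definition indep_matching_in (U : {set V}) (M : {set E}) : Prop :=
  M \subset edges_minus U /\ indep_matching M.

Definition incl_maximal (M : {set E}) : Prop :=
  indep_matching M /\ ~ (exists M' : {set E}, M \proper M' /\ indep_matching M').

Definition maximal_matching (M : {set E}) : Prop :=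
  indep_matching M /\
  ~ (exists M' : {set E}, [/\ indep_matching M',
                    span indep (gamma @: M') = span indep (gamma @: M) &
                    ~ incl_maximal M']).
End Hyper.

From mathcomp Require Import all_boot zify.
From Stdlib Require Import Classical Wf_nat.
Set Implicit Arguments. Unset Strict Implicit. Unset Printing Implicit Defensive.

(* Induction on the size of a maximal independent matching M of H - U, starting
   from U = set0.  If the labels of M span the labels of all hyperedges of H - U we
   are done.  Otherwise, among all pairs (Ms, e) where Ms is an independent matching
   of H - U with the span of M and e a hyperedge of H - U whose label escapes that
   span, take one minimising the number k of hyperedges of Ms meeting e; maximality
   forces k > 0.  Deleting the at most r + k(r-1) <= (2r-1)k vertices of e and of
   these k hyperedges F leaves Ms \ F maximal in the smaller hypergraph: if some N
   with the span of Ms \ F could be extended by an edge g, then N + F spans like M,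
   the label of g lies in that span, and a basis exchange inside
   gamma(g + N) u gamma(N + F) yields a matching with the span of M having at most
   k - 1 hyperedges meeting e. *)

Lemma classical_ex_minn (P : nat -> Prop) :
  (exists n, P n) -> exists n, P n /\ forall m, P m -> n <= m.
Proof.
move/(dec_inh_nat_subset_has_unique_least_element P (fun n => classic (P n))).
by move=> [n [[Pn n_min] _]]; exists n; split=> // m /n_min/leP.
Qed.

Section Matroid.
Variables (T : finType) (indep : {set T} -> bool).
Hypothesis matroid_indep : is_matroid indep.
Local Notation rk := (mrank indep).
Local Notation sp := (span indep).

Lemma indep_set0 : indep set0.
Proof. by case: matroid_indep. Qed.

Lemma indep_subset (A B : {set T}) : A \subset B -> indep B -> indep A.
Proof. by case: matroid_indep => _ + _; apply. Qed.

Lemma indep_augment (A B : {set T}) : indep A -> indep B -> #|A| < #|B| ->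
  exists2 x, x \in B :\: A & indep (x |: A).
Proof. by case: matroid_indep => _ _; apply. Qed.

Lemma card_le_mrank (I X : {set T}) : I \subset X -> indep I -> #|I| <= rk X.
Proof.
move=> IX hI; apply: (@leq_bigmax_cond _ (fun I => (I \in powerset X) && indep I)).
by rewrite powersetE IX hI.
Qed.

Lemma mrank_witness (X : {set T}) :
  exists I : {set T}, [/\ I \subset X, indep I & #|I| = rk X].
Proof.
have : 0 < #|[pred I : {set T} | (I \in powerset X) && indep I]|.
  by apply/card_gt0P; exists set0; rewrite inE powersetE sub0set indep_set0.
move=> /(eq_bigmax_cond (fun I : {set T} => #|I|)) [I].
by rewrite inE powersetE => /andP[IX hI] cI; exists I.
Qed.

Lemma mrank_le_card (X : {set T}) : rk X <= #|X|.
Proof. by have [I [IX _ <-]] := mrank_witness X; apply: subset_leq_card. Qed.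

Lemma mrank_indep (X : {set T}) : indep X -> rk X = #|X|.
Proof. by move=> hX; apply/eqP; rewrite eqn_leq mrank_le_card card_le_mrank. Qed.

Lemma indep_mrank (X : {set T}) : #|X| <= rk X -> indep X.
Proof.
have [I [IX hI cI]] := mrank_witness X => leX.
suff -> : X = I by [].
by apply/eqP; rewrite eq_sym eqEcard IX cI.
Qed.

Lemma mrank_mono (X Y : {set T}) : X \subset Y -> rk X <= rk Y.
Proof.
move=> XY; have [I [IX hI <-]] := mrank_witness X.
by apply: card_le_mrank (subset_trans IX XY) hI.
Qed.

Lemma indep_extend (A X : {set T}) : indep A -> A \subset X ->
  exists B : {set T}, [/\ A \subset B, B \subset X, indep B & #|B| = rk X].
Proof.
move: {2}(rk X - #|A|) (erefl (rk X - #|A|)) => n.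
elim: n A => [|n IH] A gapA hA AX.
  by exists A; split=> //; apply/eqP; rewrite eqn_leq card_le_mrank //=; lia.
have [I [IX hI cI]] := mrank_witness X.
have [|y /setDP[yI yA] hyA] := indep_augment hA hI; first by lia.
have [||B [yAB BX hB cB]] := IH (y |: A) _ hyA.
- by rewrite cardsU1 yA; lia.
- by rewrite subUset sub1set (subsetP IX) ?AX.
by exists B; split=> //; apply: subset_trans yAB; apply: subsetUr.
Qed.

Lemma subset_span (X : {set T}) : X \subset sp X.
Proof. by apply/subsetP => x xX; rewrite inE (setUidPr _) // sub1set. Qed.

Lemma indep_setU1_span (X : {set T}) x : indep X -> x \notin sp X -> indep (x |: X).
Proof.
move=> hX; rewrite inE => xX.
have : rk X < rk (x |: X) by rewrite ltn_neqAle eq_sym xX (mrank_mono (subsetUr _ _)).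
have [I [IxX hI <-]] := mrank_witness (x |: X); rewrite mrank_indep // => ltXI.
have [y /setDP[yI yX] hyX] := indep_augment hX hI ltXI.
by move: (subsetP IxX y yI); rewrite !inE (negbTE yX) orbF => /eqP <-.
Qed.

Lemma span_mono (X Y : {set T}) : X \subset Y -> sp X \subset sp Y.
Proof.
move=> XY; apply/subsetP => x; rewrite !inE => /eqP rkxX.
have [A [AX hA cA]] := mrank_witness X.
have [B [AB BY hB cB]] := indep_extend hA (subset_trans AX XY).
rewrite eqn_leq (mrank_mono (subsetUr _ _)) andbT leqNgt; apply/negP => ltY.
have [I [IxY hI cI]] := mrank_witness (x |: Y).
have [|y /setDP[yI yB] hyB] := indep_augment hB hI; first by lia.
move: (subsetP IxY y yI); rewrite !inE => /orP[/eqP eyx|yY].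
  have xA : x \notin A by apply: contra yB; rewrite eyx; apply: (subsetP AB).
  have : #|x |: A| <= rk (x |: X).
    by apply: card_le_mrank (setUS _ AX) (indep_subset (setUS _ AB) _); rewrite -eyx.
  by rewrite cardsU1 xA rkxX cA ltnn.
- have : #|y |: B| <= rk Y by apply: card_le_mrank hyB; rewrite subUset sub1set yY BY.
  by rewrite cardsU1 yB cB ltnn.
Qed.

Lemma mrank_span (X : {set T}) : rk (sp X) = rk X.
Proof.
apply/eqP; rewrite eqn_leq (mrank_mono (subset_span _)) andbT.
have [A [AX hA cA]] := mrank_witness X.
have [B [AB BsX hB <-]] := indep_extend hA (subset_trans AX (subset_span X)).
rewrite leqNgt; apply/negP => ltAB.
have [y /setDP[yB yA]] : exists y, y \in B :\: A.
  by apply/card_gt0P; rewrite cardsDS //; lia.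
move: (subsetP BsX y yB); rewrite inE => /eqP rkyX.
have : #|y |: A| <= rk (y |: X).
  by apply: card_le_mrank (setUS _ AX) (indep_subset _ hB); rewrite subUset sub1set yB.
by rewrite cardsU1 yA rkyX cA ltnn.
Qed.

Lemma span_subset_span (X Y : {set T}) : X \subset sp Y -> sp X \subset sp Y.
Proof.
move=> /span_mono XY; apply: subset_trans XY _; apply/subsetP => x.
rewrite !inE mrank_span => /eqP rkxY.
rewrite eqn_leq (mrank_mono (subsetUr _ _)) andbT -rkxY mrank_mono //.
by rewrite setUS // subset_span.
Qed.

Lemma card_indep_span (X Y : {set T}) :
  indep X -> indep Y -> sp X = sp Y -> #|X| = #|Y|.
Proof. by move=> hX hY eXY; rewrite -mrank_indep // -mrank_span eXY mrank_span mrank_indep. Qed.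

Lemma span_indep_eq (I J : {set T}) :
  indep I -> I \subset sp J -> #|I| = rk J -> sp I = sp J.
Proof.
move=> hI IJ cI; apply/eqP; rewrite eqEsubset span_subset_span //=.
apply/subsetP => x xJ; apply/negPn/negP => xI.
have xnI : x \notin I by apply: contra xI; apply: (subsetP (subset_span I)).
have : #|x |: I| <= rk (sp J).
  by apply: card_le_mrank (indep_setU1_span hI xI); rewrite subUset sub1set xJ.
by rewrite cardsU1 xnI mrank_span cI ltnn.
Qed.

Lemma span_setUl (X Y Z : {set T}) : sp X = sp Y -> sp (X :|: Z) = sp (Y :|: Z).
Proof.
have sub X' Y' : sp X' = sp Y' -> X' :|: Z \subset sp (Y' :|: Z).
  move=> eXY; rewrite subUset (subset_trans (subsetUr Y' Z)) ?subset_span // andbT.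
  by rewrite (subset_trans (subset_span X')) // eXY span_mono ?subsetUl.
by move=> eXY; apply/eqP; rewrite eqEsubset !span_subset_span // sub.
Qed.

Lemma indep_setUl_span (X Y Z : {set T}) : indep X -> indep Y -> sp X = sp Y ->
  indep (X :|: Z) -> [disjoint X & Z] -> indep (Y :|: Z) /\ [disjoint Y & Z].
Proof.
move=> hX hY eXY hXZ dXZ.
have cXY := card_indep_span hX hY eXY.
have rkYZ : rk (Y :|: Z) = #|Y| + #|Z|.
  rewrite -mrank_span -(span_setUl Z eXY) mrank_span mrank_indep //.
  by rewrite cardsU (disjoint_setI0 dXZ) cards0 subn0 cXY.
have cYZ : #|Y :|: Z| = #|Y| + #|Z|.
  by apply/eqP; rewrite eqn_leq (leq_card_setU _ _).1 -rkYZ mrank_le_card.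
split; first by apply: indep_mrank; rewrite cYZ rkYZ.
by rewrite -setI_eq0 -cards_eq0; move: (cardsUI Y Z); rewrite cYZ; lia.
Qed.

Lemma indep_exchange (I J : {set T}) : indep I -> indep J -> I \subset sp J ->
  exists2 J' : {set T}, J' \subset J :\: I &
    [/\ indep (I :|: J'), #|I| + #|J'| = #|J| & sp (I :|: J') = sp J].
Proof.
move=> hI hJ IJ.
have rkIJ : rk (I :|: J) = #|J|.
  apply/eqP; rewrite eqn_leq card_le_mrank ?subsetUr // andbT.
  rewrite -(mrank_indep hJ) -(mrank_span J) mrank_mono //.
  by rewrite subUset IJ subset_span.
have [B [IB BIJ hB cB]] := indep_extend hI (subsetUl I J).
have eB : I :|: B :\: I = B by rewrite -{1}(setIidPr IB) setID.
exists (B :\: I).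
  apply/subsetP => x /setDP[xB xI]; rewrite inE xI.
  by move: (subsetP BIJ x xB); rewrite inE (negbTE xI).
rewrite eB; split=> //; first by rewrite -rkIJ -cB -(cardsID I B) (setIidPr IB).
apply: span_indep_eq; rewrite // ?cB ?rkIJ ?mrank_indep //.
by apply: subset_trans BIJ _; rewrite subUset IJ subset_span.
Qed.

Lemma span_basis (X B : {set T}) :
  indep B -> B \subset X -> X \subset sp B -> basis_of indep (sp X) B.
Proof.
move=> hB BX XB; split=> //; first exact: subset_trans BX (subset_span X).
move=> B' BB' B'X hB'; apply/eqP; rewrite eq_sym eqEcard BB' -(mrank_indep hB).
by rewrite -mrank_span card_le_mrank // (subset_trans B'X) // span_subset_span.
Qed.
End Matroid.

Lemma card_bigcup_leq_sum (I V : finType) (P : {pred I}) (A : I -> {set V}) :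
  #|\bigcup_(i in P) A i| <= \sum_(i in P) #|A i|.
Proof.
apply: (big_ind2 (fun (S : {set V}) (m : nat) => #|S| <= m)) => //; first by rewrite cards0.
by move=> S1 m1 S2 m2 le1 le2; rewrite cardsU; lia.
Qed.

Lemma card_edge_cover (V E : finType) (edge : E -> {set V}) (r : nat) (F : {set E}) e :
  (forall f, #|edge f| <= r) -> (forall f, f \in F -> ~~ [disjoint edge f & edge e]) ->
  #|edge e :|: \bigcup_(f in F) edge f| <= r + #|F| * (r - 1).
Proof.
move=> le_r meetF.
have -> : edge e :|: \bigcup_(f in F) edge f = edge e :|: \bigcup_(f in F) (edge f :\: edge e).
  apply/setP => x; rewrite !in_setU; case xe: (x \in edge e) => //=.
  by apply/bigcupP/bigcupP => -[f fF xf]; exists f; rewrite // ?inE ?xe in xf *.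
apply: leq_trans (leq_card_setU _ _).1 _; apply: leq_add (le_r e) _.
apply: leq_trans (card_bigcup_leq_sum _ _) _; rewrite -sum_nat_const; apply: leq_sum => f fF.
have : 0 < #|edge f :&: edge e| by rewrite card_gt0 setI_eq0 meetF.
by move: (le_r f); rewrite cardsD; lia.
Qed.

Section Matching.
Variables (V E T : finType) (edge : E -> {set V}) (gamma : E -> T).
Variable indep : {set T} -> bool.
Hypothesis matroid_indep : is_matroid indep.
Local Notation D := (edges_minus edge).
Local Notation IM := (indep_matching edge gamma indep).
Local Notation sp := (span indep).

Lemma card_imset_matching (M : {set E}) : IM M -> #|gamma @: M| = #|M|.
Proof. by case=> _ inj _; rewrite card_in_imset. Qed.

Lemma indep_imset_matching (M : {set E}) : IM M -> indep (gamma @: M).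
Proof. by case. Qed.

Lemma indep_matchingS (M N : {set E}) : N \subset M -> IM M -> IM N.
Proof.
move=> /subsetP NM [dj inj hM]; split.
- by move=> x y /NM xM /NM yM; apply: dj.
- by move=> x y /NM xM /NM yM; apply: inj.
- by apply: indep_subset hM; rewrite // imsetS //; apply/subsetP.
Qed.

Lemma indep_matchingU1 (M : {set E}) e : IM M -> e \notin M ->
  (forall f, f \in M -> [disjoint edge e & edge f]) -> gamma e \notin gamma @: M ->
  indep (gamma e |: gamma @: M) -> IM (e |: M).
Proof.
move=> [dj inj _] eM dje geM hM; split; last by rewrite imsetU1.
- move=> x y; rewrite !inE => /predU1P[->|xM] /predU1P[->|yM]; rewrite ?eqxx //.
  + by move=> _; apply: dje.
  + by move=> _; rewrite disjoint_sym; apply: dje.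
  + exact: dj.
- move=> x y; rewrite !inE => /predU1P[->|xM] /predU1P[->|yM] //.
  + by move=> gey; case/negP: geM; rewrite gey imset_f.
  + by move=> gxe; case/negP: geM; rewrite -gxe imset_f.
  + exact: inj.
Qed.

Lemma indep_matchingU (A B : {set E}) : IM A -> IM B ->
  (forall a b, a \in A -> b \in B -> a != b -> [disjoint edge a & edge b]) ->
  [disjoint gamma @: A & gamma @: B] -> indep (gamma @: A :|: gamma @: B) -> IM (A :|: B).
Proof.
move=> [djA injA _] [djB injB _] djAB dgAB hAB; split; last by rewrite imsetU.
- move=> x y; rewrite !inE => /orP[xA|xB] /orP[yA|yB] xy.
  + exact: djA.
  + exact: djAB.
  + by rewrite disjoint_sym; apply: djAB; rewrite // eq_sym.
  + exact: djB.
- move=> x y; rewrite !inE => /orP[xA|xB] /orP[yA|yB] gxy.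
  + exact: injA.
  + by move: (disjointFr dgAB (imset_f gamma xA)); rewrite gxy imset_f.
  + by move: (disjointFr dgAB (imset_f gamma yA)); rewrite -gxy imset_f.
  + exact: injB.
Qed.

Lemma label_notin_matching (M : {set E}) g : IM (g |: M) -> g \notin M ->
  gamma g \notin gamma @: M.
Proof.
case=> _ inj _ gM; apply/imsetP => -[x xM gx].
by move: gM; rewrite (inj g x) ?inE ?eqxx ?xM ?orbT.
Qed.

Lemma edges_minusS (U U' : {set V}) : U \subset U' -> D U' \subset D U.
Proof. by move=> UU'; apply/subsetP => x; rewrite !inE; apply: disjointWr. Qed.

Definition maximal_in (U : {set V}) (M : {set E}) : Prop :=
  [/\ M \subset D U, IM M &
      forall (N : {set E}) g, N \subset D U -> IM N -> sp (gamma @: N) = sp (gamma @: M) ->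
        g \in D U -> g \notin N -> ~ IM (g |: N)].

Lemma maximal_in_set0 (M : {set E}) : maximal_matching edge gamma indep M -> maximal_in set0 M.
Proof.
move=> [IM_M noM]; split=> //.
  by apply/subsetP => x _; rewrite inE -setI_eq0 setI0.
move=> N g _ IM_N spN _ gN IM_gN; apply: noM; exists N; split=> // -[_]; apply.
exists (g |: N); split=> //; rewrite properE subsetUr /=.
by apply/subsetP => /(_ g (setU11 g N)); apply/negP.
Qed.

Lemma imset_label_preimage (A B : {set E}) (S : {set T}) :
  S \subset gamma @: (A :|: B) :\: gamma @: A -> gamma @: [set b in B | gamma b \in S] = S.
Proof.
move=> SAB; apply/eqP; rewrite eqEsubset; apply/andP; split.
  by apply/subsetP => y /imsetP[b]; rewrite inE => /andP[_ bS] ->.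
apply/subsetP => y yS; have /setDP[] := subsetP SAB y yS.
rewrite imsetU => /setUP[-> //|/imsetP[b bB yb] _].
by rewrite yb imset_f // inE bB -yb.
Qed.

Definition meeting (N : {set E}) (e : E) : {set E} :=
  [set f in N | ~~ [disjoint edge f & edge e]].

Lemma meeting_subset (N : {set E}) e : meeting N e \subset N.
Proof. by apply/subsetP => f; rewrite inE => /andP[]. Qed.

Section Peel.
Variables (U : {set V}) (M Ms : {set E}) (e : E).
Hypotheses (M_max : maximal_in U M) (Ms_sub : Ms \subset D U) (Ms_IM : IM Ms).
Hypothesis Ms_span : sp (gamma @: Ms) = sp (gamma @: M).
Hypotheses (e_D : e \in D U) (e_out : gamma e \notin sp (gamma @: M)).
Hypothesis Ms_min : forall N : {set E}, N \subset D U -> IM N -> sp (gamma @: N) = sp (gamma @: M) ->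
  #|meeting Ms e| <= #|meeting N e|.

Local Notation F := (meeting Ms e).
Local Notation U1 := (U :|: (edge e :|: \bigcup_(f in F) edge f)).

Lemma meeting_gt0 : 0 < #|F|.
Proof.
rewrite card_gt0; apply/negP => /eqP F0.
have e_outMs : gamma e \notin sp (gamma @: Ms) by rewrite Ms_span.
have e_labelMs : gamma e \notin gamma @: Ms.
  by apply: contra e_outMs; apply: (subsetP (subset_span _ _)).
have [_ _ maxM] := M_max; apply: (maxM Ms e) => //.
  by apply: contra e_labelMs; apply: imset_f.
apply: indep_matchingU1; rewrite ?indep_setU1_span ?indep_imset_matching //.
- by apply: contra e_labelMs; apply: imset_f.
- move=> f fMs; rewrite disjoint_sym.
  have : f \notin F by rewrite F0 inE.
  by rewrite inE fMs negbK.
Qed.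

Lemma peel_disjoint_edge x : x \in D U1 -> [disjoint edge x & edge e].
Proof.
by rewrite inE; apply: disjointWr; apply: subset_trans (subsetUr _ _); apply: subsetUl.
Qed.

Lemma peel_disjoint_meeting x f : x \in D U1 -> f \in F -> [disjoint edge x & edge f].
Proof.
rewrite inE => xU1 fF; apply: disjointWr xU1.
by apply: subset_trans (subsetUr _ _); apply: subset_trans (subsetUr _ _); apply: bigcup_sup.
Qed.

Lemma peel_notin_meeting x : x \in D U1 -> x \notin F.
Proof. by move/peel_disjoint_edge; rewrite inE => ->; rewrite andbF. Qed.

Lemma peel_edges_minus : D U1 \subset D U.
Proof. exact/edges_minusS/subsetUl. Qed.

Lemma peel_matching_sub : Ms :\: F \subset D U1.
Proof.
apply/subsetP => f /setDP[fMs fF]; move: (subsetP Ms_sub f fMs).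
rewrite !inE -!setI_eq0 !setIUr !setU_eq0 => ->; rewrite !setI_eq0 /=.
apply/andP; split; first by move: fF; rewrite inE fMs negbK.
apply/bigcup_disjoint => f' f'F; have [dj _ _] := Ms_IM.
apply: dj => //; first exact: (subsetP (meeting_subset Ms e)).
by move: f'F; apply: contraTneq => <-.
Qed.

Lemma peel_restore (N : {set E}) : N \subset D U1 -> IM N ->
  sp (gamma @: N) = sp (gamma @: (Ms :\: F)) ->
  [/\ N :|: F \subset D U, IM (N :|: F) & sp (gamma @: (N :|: F)) = sp (gamma @: M)].
Proof.
move=> ND IM_N spN.
have FMs := meeting_subset Ms e.
have MsF : gamma @: (Ms :\: F) :|: gamma @: F = gamma @: Ms.
  by rewrite -imsetU setUC -{1}(setIidPr FMs) setID.
have dj_labels : [disjoint gamma @: (Ms :\: F) & gamma @: F].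
  have [_ inj _] := Ms_IM; rewrite -setI_eq0; apply/eqP/setP => y; rewrite !inE.
  apply/negbTE/negP => /andP[/imsetP[a /setDP[aMs aF] ->] /imsetP[b bF gab]].
  by move: aF; rewrite (inj a b aMs (subsetP FMs b bF) gab) bF.
have hMs : indep (gamma @: (Ms :\: F) :|: gamma @: F).
  by rewrite MsF; apply: indep_imset_matching.
have [hNF dNF] := indep_setUl_span matroid_indep
  (indep_imset_matching (indep_matchingS (subsetDl _ _) Ms_IM))
  (indep_imset_matching IM_N) (esym spN) hMs dj_labels.
split.
- by rewrite subUset (subset_trans ND peel_edges_minus) (subset_trans FMs Ms_sub).
- apply: indep_matchingU => //; first exact: indep_matchingS FMs Ms_IM.
  by move=> a b aN bF _; apply: peel_disjoint_meeting => //; apply: (subsetP ND).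
- by rewrite imsetU -(span_setUl matroid_indep _ (esym spN)) MsF.
Qed.

Lemma peel_meeting (N X : {set E}) : N \subset D U1 -> meeting (N :|: X) e \subset X.
Proof.
move=> ND; apply/subsetP => f; rewrite !inE => /andP[/orP[fN|//]].
by rewrite peel_disjoint_edge // (subsetP ND).
Qed.

Lemma peel_setI_meeting (N : {set E}) : N \subset D U1 -> N :&: F = set0.
Proof.
move=> ND; apply/setP => f; rewrite in_setI in_set0; case fN: (f \in N) => //=.
exact/negbTE/peel_notin_meeting/(subsetP ND).
Qed.

Lemma peel_disjoint_extension (N : {set E}) g : g \in D U1 -> g \notin N -> IM (g |: N) ->
  forall f, f \in N :|: F -> [disjoint edge g & edge f].
Proof.
move=> gD gN IM_gN f /setUP[fN|]; last exact: peel_disjoint_meeting.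
have [dj _ _] := IM_gN; apply: dj; rewrite ?setU11 ?setU1r //.
by move: gN; apply: contraNneq => ->.
Qed.

Lemma peel_extension_label (N : {set E}) g : N \subset D U1 -> IM N ->
  sp (gamma @: N) = sp (gamma @: (Ms :\: F)) -> g \in D U1 -> g \notin N -> IM (g |: N) ->
  gamma g \in sp (gamma @: (N :|: F)).
Proof.
move=> ND IM_N spN gD gN IM_gN; apply/negPn/negP => g_out.
have [NF_D IM_NF spNF] := peel_restore ND IM_N spN.
have [_ _ maxM] := M_max.
apply: (maxM _ g NF_D IM_NF spNF (subsetP peel_edges_minus g gD)).
  by rewrite inE negb_or gN peel_notin_meeting.
apply: indep_matchingU1; rewrite ?indep_setU1_span ?indep_imset_matching //.
- by rewrite inE negb_or gN peel_notin_meeting.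
- exact: peel_disjoint_extension.
- by apply: contra g_out; apply: (subsetP (subset_span _ _)).
Qed.

Lemma peel_exchange (N : {set E}) g : N \subset D U1 -> IM N ->
  sp (gamma @: N) = sp (gamma @: (Ms :\: F)) -> g \in D U1 -> g \notin N -> IM (g |: N) ->
  exists2 N' : {set E}, [/\ N' \subset D U, IM N' & sp (gamma @: N') = sp (gamma @: M)] &
    #|meeting N' e| < #|F|.
Proof.
move=> ND IM_N spN gD gN IM_gN.
have [NF_D IM_NF spNF] := peel_restore ND IM_N spN.
set I := gamma @: (g |: N); set J := gamma @: (N :|: F).
have IJ : I \subset sp J.
  rewrite /I imsetU1 subUset sub1set peel_extension_label //.
  by rewrite (subset_trans _ (subset_span _ _)) ?imsetS ?subsetUl.
have [J' J'_sub [hIJ' cIJ' spIJ']] := indep_exchange matroid_indep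
  (indep_imset_matching IM_gN) (indep_imset_matching IM_NF) IJ.
pose F' := [set f in F | gamma f \in J'].
have labels_F' : gamma @: F' = J'.
  apply: (@imset_label_preimage N); apply: (subset_trans J'_sub).
  by apply: setDS; rewrite imsetS ?subsetUr.
have F'F : F' \subset F by apply/subsetP => f; rewrite inE => /andP[].
have N'NF : N :|: F' \subset N :|: F by rewrite setUS.
have gI : gamma g \in I by rewrite imset_f ?setU11.
exists (g |: (N :|: F')); first split.
- by rewrite subUset sub1set (subsetP peel_edges_minus) // (subset_trans N'NF).
- apply: indep_matchingU1 (indep_matchingS N'NF IM_NF) _ _ _ _.
  + have gNF : g \notin N :|: F by rewrite inE negb_or gN peel_notin_meeting.
    by apply: contraNN gNF; apply: (subsetP N'NF).
  + by move=> f /(subsetP N'NF); apply: peel_disjoint_extension.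
  + rewrite imsetU labels_F' inE negb_or label_notin_matching //=.
    by apply/negP => /(subsetP J'_sub) /setDP[_]; rewrite gI.
  + by rewrite imsetU labels_F' setUA -imsetU1.
- by rewrite imsetU1 imsetU labels_F' setUA -imsetU1 spIJ'.
have cF' : #|F'| = #|J'|.
  have [_ inj _] := Ms_IM; rewrite -labels_F' card_in_imset // => x y xF' yF'.
  by apply: inj; apply: (subsetP (meeting_subset Ms e)); apply: (subsetP F'F).
have cJ : #|J| = #|N| + #|F|.
  by rewrite /J card_imset_matching // -cardsUI peel_setI_meeting // cards0 addn0.
have cI : #|I| = #|N|.+1 by rewrite /I card_imset_matching // cardsU1 gN.
rewrite setUA; apply: leq_ltn_trans (subset_leq_card (peel_meeting _ _)) _.
  by rewrite subUset sub1set gD.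
by rewrite cF' -(ltn_add2l #|I|) cIJ' cJ cI addSn ltnS.
Qed.

Lemma maximal_in_peel : maximal_in U1 (Ms :\: F).
Proof.
split; [exact: peel_matching_sub | exact: indep_matchingS (subsetDl _ _) Ms_IM |].
move=> N g ND IM_N spN gD gN IM_gN.
have [N' [N'D IM_N' spN'] lt_meet] := peel_exchange ND IM_N spN gD gN IM_gN.
by move: (Ms_min N'D IM_N' spN'); rewrite leqNgt lt_meet.
Qed.
End Peel.

Lemma maximal_in_spanning (r : nat) : 1 <= r -> (forall f, #|edge f| <= r) ->
  forall n (U : {set V}) (M : {set E}), maximal_in U M -> #|M| = n ->
  exists a (U' : {set V}) (M' : {set E}),
    [/\ #|U'| <= #|U| + (2 * r - 1) * a, M' \subset D U', IM M', #|M'| + a = n &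
        gamma @: D U' \subset sp (gamma @: M')].
Proof.
move=> r_gt0 edge_le_r; elim/ltn_ind => n IH U M maxM cM.
have [MD IM_M _] := maxM.
have [spanning|] := boolP (gamma @: D U \subset sp (gamma @: M)).
  by exists 0, U, M; rewrite muln0 !addn0.
case/subsetPn => _ /imsetP[e0 e0D ->] e0_out.
pose P k := exists (Ms : {set E}) (e : E),
  [/\ Ms \subset D U, IM Ms, sp (gamma @: Ms) = sp (gamma @: M),
     e \in D U /\ gamma e \notin sp (gamma @: M) & #|meeting Ms e| = k].
have [|k [[Ms [e [MsD IM_Ms spMs [eD e_out] cF]]] k_min]] := @classical_ex_minn P.
  by exists #|meeting M e0|, M, e0.
have Ms_min (N : {set E}) : N \subset D U -> IM N -> sp (gamma @: N) = sp (gamma @: M) ->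
    #|meeting Ms e| <= #|meeting N e|.
  by move=> ND IM_N spN; rewrite cF; apply: k_min; exists N, e.
have k_gt0 : 0 < k by rewrite -cF (meeting_gt0 maxM MsD IM_Ms spMs eD e_out).
have cMs : #|Ms| = n.
  rewrite -cM -(card_imset_matching IM_Ms) -(card_imset_matching IM_M).
  exact: card_indep_span (indep_imset_matching IM_Ms) (indep_imset_matching IM_M) spMs.
have k_le_n : k <= n by rewrite -cF -cMs subset_leq_card ?meeting_subset.
have cM1 : #|Ms :\: meeting Ms e| = n - k by rewrite cardsDS ?meeting_subset // cMs cF.
have [|a [U' [M' [cU' M'D IM_M' cM' spanM']]]] :=
  IH (n - k) _ _ _ (maximal_in_peel maxM MsD IM_Ms spMs Ms_min) cM1.
  by rewrite ltn_subrL k_gt0 (leq_trans k_gt0 k_le_n).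
exists (k + a), U', M'; split=> //; last by rewrite addnCA cM' subnKC.
apply: leq_trans cU' _; rewrite mulnDr addnA leq_add2r.
rewrite cardsU; apply: leq_trans (leq_subr _ _) _; rewrite leq_add2l.
apply: leq_trans (card_edge_cover edge_le_r _) _; first by move=> f; rewrite inE => /andP[].
by rewrite cF; clear -r_gt0 k_gt0; nia.
Qed.
End Matching.

Theorem mainTheorem6
  (r : nat) (V E T : finType) (edge : E -> {set V}) (gamma : E -> T)
  (indep : {set T} -> bool) (l : nat) :
  1 <= r ->
  (forall e, edge e != set0) ->
  (forall e, #|edge e| <= r) ->
  is_matroid indep ->
  (exists M : {set E}, maximal_matching edge gamma indep M /\ #|M| = l) ->
  exists a : nat, a <= l /\
    exists U : {set V}, #|U| <= (2 * r - 1) * a /\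
      exists M' : {set E},
        [/\ indep_matching_in edge gamma indep U M', #|M'| = l - a &
            basis_of indep (span indep (gamma @: edges_minus edge U)) (gamma @: M')].
Proof.
(* Hyperedges need not be non-empty. *)
move=> r_gt0 _ edge_le_r matroid_indep [M [maxM cM]].
have [a [U [M' [cU M'D IM_M' cM' spanM']]]] :=
  maximal_in_spanning matroid_indep r_gt0 edge_le_r (maximal_in_set0 maxM) cM.
exists a; split; first by rewrite -cM' leq_addl.
exists U; split; first by rewrite cards0 in cU.
exists M'; split; [by [] | by rewrite -cM' addnK |].
apply: span_basis => //; [exact: indep_imset_matching IM_M' | exact: imsetS M'D].
Qed.
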